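(* Let $h:\{0,1,2,3\}^*\to\{0,1,2,3\}^*$ be the $11$-uniform morphism defined by $h(0)=01312021310$, $h(1)=12023132021$, $h(2)=23130203132$, $h(3)=30201310203$. Then every letter image $h(a)$ is a palindrome, and the infinite fixed point $h^\omega(0)=\lim_{n\to\infty}h^n(0)$ contains no factor that is a $(p/q)$-power with $p/q>\tfrac32$. Consequently, for every $n\ge1$, $h^n(0)$ is a palindrome of length $11^n$ with critical exponent $\tfrac32$.
   Context: A word $x=x[1..n]$ has period $q$ if $x[i]=x[i+q]$ for $1\le i\le n-q$. For integers $p>q\ge1$, $x$ is a $(p/q)$-power if it has length $p$ and period $q$. The critical exponent of a word is the maximum, over its nonempty factors $w'$, of the largest $p/q$ such that $w'$ is a $(p/q)$-power. Since $h(0)$ begins with $0$, the words $h^n(0)$ are prefixes of one another and define the infinite fixed point $h^\omega(0)$. *)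

From mathcomp Require Import all_boot all_order all_algebra.
Set Implicit Arguments. Unset Strict Implicit. Unset Printing Implicit Defensive.
Import Order.TTheory GRing.Theory Num.Theory.

(* letter images of the 11-uniform morphism h (letters >= 4 never occur) *)
Definition h_letter (a : nat) : seq nat :=
  match a with
  | 0 => [:: 0; 1; 3; 1; 2; 0; 2; 1; 3; 1; 0]
  | 1 => [:: 1; 2; 0; 2; 3; 1; 3; 2; 0; 2; 1]
  | 2 => [:: 2; 3; 1; 3; 0; 2; 0; 3; 1; 3; 2]
  | 3 => [:: 3; 0; 2; 0; 1; 3; 1; 0; 2; 0; 3]
  | _ => [::]
  end.

Definition h (w : seq nat) : seq nat := flatten (map h_letter w).

Definition hn (n : nat) : seq nat := iter n h [:: 0].

(* the infinite fixed point h^omega(0), as a function nat -> letter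
   (0-indexed); position i is read off h^(i+1)(0), which has length
   11^(i+1) > i. *)
Definition hw (i : nat) : nat := nth 0 (hn i.+1) i.

Definition palindrome (w : seq nat) : bool := rev w == w.

(* x has period q (0-indexed version of x[i] = x[i+q], 1 <= i <= |x|-q) *)
Definition has_period (x : seq nat) (q : nat) : Prop :=
  forall i, i + q < size x -> nth 0 x i = nth 0 x (i + q).

Definition is_power (x : seq nat) (p q : nat) : Prop :=
  [/\ 0 < q, q < p, size x = p & has_period x q].

Definition hw_factor (i p : nat) : seq nat := mkseq (fun k => hw (i + k)) p.

Definition critical_exponent_is (w : seq nat) (r : rat) : Prop :=
  (exists x p q, [/\ infix x w, is_power x p q & r = (p%:Q / q%:Q)%R]) /\
  (forall x p q, infix x w -> is_power x p q -> (p%:Q / q%:Q <= r)%R).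

From mathcomp Require Import all_boot all_order all_algebra.
From mathcomp Require Import zify.
Set Implicit Arguments. Unset Strict Implicit. Unset Printing Implicit Defensive.
Import Order.TTheory GRing.Theory Num.Theory.

(* Letterwise h(a) = a + h(0) (mod 4), so a letter of the fixed point is recovered
   from any single letter of its 11-block, and no h(a) occurs inside h(b)h(c) at an
   offset 1..10.  Take a repetition of period q and exponent > 3/2 in h^w(0).  If it
   is long (length > q + 21), it contains a whole aligned block: for q not divisible
   by 11 this block reappears misaligned, and for q = 11q' the repetition
   desubstitutes to one of period q' and exponent still > 3/2.  Short repetitions
   have q <= 41 and lie inside h^2(ab) for a factor ab (a <> b) of h^w(0); they are
   excluded by a finite check. *)

Lemma h_cat u v : h (u ++ v) = h u ++ h v.
Proof. by rewrite /h map_cat flatten_cat. Qed.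

Lemma h_cons a w : h (a :: w) = h_letter a ++ h w.
Proof. by []. Qed.

Lemma size_h_letter a : a < 4 -> size (h_letter a) = 11.
Proof. by do 4?[case: a => [|a]]. Qed.

Lemma all_h w : all (gtn 4) (h w).
Proof.
elim: w => //= a w IH; rewrite h_cons all_cat IH andbT.
by do 4?[case: a => [|a]].
Qed.

Lemma size_h w : all (gtn 4) w -> size (h w) = 11 * size w.
Proof.
elim: w => //= a w IH /andP[a4 w4].
by rewrite h_cons size_cat size_h_letter // IH // mulnS.
Qed.

Lemma drop_h i w : all (gtn 4) w -> h (drop i w) = drop (11 * i) (h w).
Proof.
elim: w i => [|a w IH] [|i] //= /andP[a4 w4]; first by rewrite muln0 drop0.
by rewrite h_cons drop_cat size_h_letter // mulnS ltnNge leq_addr /= addKn IH.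
Qed.

Lemma take_h i w : all (gtn 4) w -> h (take i w) = take (11 * i) (h w).
Proof.
elim: w i => [|a w IH] [|i] //= /andP[a4 w4]; first by rewrite muln0 take0.
by rewrite !h_cons take_cat size_h_letter // mulnS ltnNge leq_addr /= addKn IH.
Qed.

Lemma h_letter_palindrome a : a < 4 -> palindrome (h_letter a).
Proof. by do 4?[case: a => [|a]]. Qed.

Lemma rev_h w : all (fun a => palindrome (h_letter a)) w -> rev (h w) = h (rev w).
Proof.
elim: w => //= a w IH /andP[/eqP pal_a palw].
by rewrite h_cons rev_cat IH // rev_cons -cats1 h_cat pal_a /h /= cats0.
Qed.

Lemma all_hn n : all (gtn 4) (hn n).
Proof. by case: n => //= n; apply: all_h. Qed.

Lemma hnS n : hn n.+1 = h (hn n).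
Proof. by []. Qed.

Lemma size_hn n : size (hn n) = 11 ^ n.
Proof. by elim: n => //= n IH; rewrite size_h ?all_hn // IH expnS. Qed.

Lemma prefix_hn m n : m <= n -> prefix (hn m) (hn n).
Proof.
have step k : prefix (hn k) (hn k.+1).
  elim: k => // k /prefixP[s IH]; apply/prefixP; exists (h s).
  by rewrite hnS {1}IH h_cat.
elim: n => [|n IH]; first by rewrite leqn0 => /eqP->; apply: prefix_refl.
rewrite leq_eqVlt ltnS => /predU1P[->|/IH]; first exact: prefix_refl.
by move/prefix_trans; apply.
Qed.

Lemma nth_prefix (T : eqType) (x0 : T) s t j :
  prefix s t -> j < size s -> nth x0 t j = nth x0 s j.
Proof. by case/prefixP=> r ->; rewrite nth_cat => ->. Qed.

Lemma nth_hn n j : j < 11 ^ n -> nth 0 (hn n) j = hw j.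
Proof.
move=> j_lt; rewrite /hw -(@nth_prefix _ _ _ (hn (maxn n j.+1))) ?prefix_hn ?leq_maxl ?size_hn //.
rewrite (@nth_prefix _ _ (hn j.+1)) ?prefix_hn ?leq_maxr // size_hn.
exact: ltn_trans (ltnSn j) (ltn_expl _ _).
Qed.

Lemma size_hw_factor i n : size (hw_factor i n) = n.
Proof. exact: size_mkseq. Qed.

Lemma nth_hw_factor i n k : k < n -> nth 0 (hw_factor i n) k = hw (i + k).
Proof. exact: nth_mkseq. Qed.

Lemma hw_factor_eq i j n : (forall k, k < n -> hw (i + k) = hw (j + k)) ->
  hw_factor i n = hw_factor j n.
Proof.
move=> eq_ij; apply: (@eq_from_nth _ 0); rewrite ?size_hw_factor // => k k_lt.
by rewrite !nth_hw_factor ?eq_ij.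
Qed.

Lemma hw_factor_cat i m n : hw_factor i (m + n) = hw_factor i m ++ hw_factor (i + m) n.
Proof.
rewrite /hw_factor /mkseq iotaD map_cat add0n -{2}[m]addn0 iotaDl -map_comp.
by congr (_ ++ _); apply: eq_map => k /=; rewrite addnA.
Qed.

Lemma hw_factor_sub i j n m : j + n <= m ->
  hw_factor (i + j) n = take n (drop j (hw_factor i m)).
Proof.
move=> le_m; rewrite -(subnKC le_m) -addnA !hw_factor_cat.
by rewrite drop_size_cat ?size_hw_factor // take_size_cat ?size_hw_factor.
Qed.

Lemma hw_factor_hn i p n : i + p <= 11 ^ n -> hw_factor i p = take p (drop i (hn n)).
Proof.
move=> le_p; have size_p : p <= size (drop i (hn n)).
  by rewrite size_drop size_hn leq_subRL ?(leq_trans (leq_addr p i)).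
apply: (@eq_from_nth _ 0); first by rewrite size_hw_factor size_takel.
move=> k; rewrite size_hw_factor => k_lt.
rewrite nth_hw_factor // nth_take // nth_drop nth_hn //.
by apply: leq_trans le_p; rewrite ltn_add2l.
Qed.

Lemma hw_factor_h i p : hw_factor (11 * i) (11 * p) = h (hw_factor i p).
Proof.
have le_N : i + p <= 11 ^ (i + p) by apply/ltnW/ltn_expl.
rewrite (hw_factor_hn le_N) (@hw_factor_hn _ _ (i + p).+1); last by rewrite -mulnDr expnS leq_mul2l.
have drop_lt4 : all (gtn 4) (drop i (hn (i + p))).
  by apply/allP=> x /mem_drop/(allP (all_hn _)).
by rewrite take_h // drop_h ?all_hn.
Qed.

Lemma hw_factor1 i : hw_factor i 1 = [:: hw i].
Proof. by rewrite /hw_factor /mkseq /= addn0. Qed.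

Lemma hw_factor2 i : hw_factor i 2 = [:: hw i; hw i.+1].
Proof. by rewrite /hw_factor /mkseq /= addn0 addn1. Qed.

Lemma hw_mul11D i n k : k < 11 * n -> hw (11 * i + k) = nth 0 (h (hw_factor i n)) k.
Proof. by move=> k_lt; rewrite -hw_factor_h nth_hw_factor. Qed.

Lemma hw_lt4 i : hw i < 4.
Proof.
apply/(allP (all_hn i.+1))/mem_nth.
by rewrite size_hn (ltn_trans (ltnSn i) (ltn_expl _ _)).
Qed.

Lemma h1_nth_inj a b k : a < 4 -> b < 4 -> k < 11 ->
  nth 0 (h [:: a]) k = nth 0 (h [:: b]) k -> a = b.
Proof. by do 4?[case: a => [|a]] => //; do 4?[case: b => [|b]] => //; do 11?[case: k => [|k]]. Qed.

Lemma h2_adjacent_neq a b k : a < 4 -> b < 4 -> a != b -> k < 11 ->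
  nth 0 (h [:: a; b]) k != nth 0 (h [:: a; b]) k.+1.
Proof. by do 4?[case: a => [|a]] => //; do 4?[case: b => [|b]] => //; do 11?[case: k => [|k]]. Qed.

Lemma h_unaligned_neq a b c r : a < 4 -> b < 4 -> c < 4 -> 0 < r < 11 ->
  h [:: a] != take 11 (drop r (h [:: b; c])).
Proof.
by do 4?[case: a => [|a]] => //; do 4?[case: b => [|b]] => //; do 4?[case: c => [|c]] => //;
  do 11?[case: r => [|r]].
Qed.

(* A repetition of period q and exponent > 3/2 contains one of length q + q/2 + 1;
   when q <= 41 and it starts in the block h^2(hw m) it lies inside h^2(hw m hw m+1). *)
Lemma h2_short_repetition_free a b t q : a < 4 -> b < 4 -> a != b -> t < 121 -> 0 < q < 42 ->
  take (q %/ 2).+1 (drop t (h (h [:: a; b]))) != take (q %/ 2).+1 (drop (t + q) (h (h [:: a; b]))).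
Proof.
have check : all (fun a => all (fun b => (a != b) ==>
    let w := h (h [:: a; b]) in
    all (fun t => all (fun q => take (q %/ 2).+1 (drop t w) != take (q %/ 2).+1 (drop (t + q) w))
      (iota 1 41)) (iota 0 121)) (iota 0 4)) (iota 0 4) by vm_compute.
move=> a4 b4 ab t_lt q_bd.
have in_iota m n k : m <= k < m + n -> k \in iota m n by rewrite mem_iota.
move/allP/(_ a (in_iota 0 4 a a4))/allP/(_ b (in_iota 0 4 b b4))/implyP/(_ ab): check.
by move/allP/(_ t (in_iota 0 121 t t_lt))/allP/(_ q (in_iota 1 41 q q_bd)).
Qed.

Lemma hw_adjacent_neq i : hw i != hw i.+1.
Proof.
elim/ltn_ind: i => i IH; have [-> | i_gt0] := posnP i; first by vm_compute.
have m_lt : i %/ 11 < i by rewrite ltn_Pdiv.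
move: (divn_eq i 11) (ltn_pmod i (isT : 0 < 11)) (IH _ m_lt).
set m := i %/ 11; set k := i %% 11 => -> k_lt hw_m_neq.
rewrite mulnC -addnS !(@hw_mul11D m 2) ?hw_factor2; try lia.
by apply: h2_adjacent_neq; rewrite ?hw_lt4.
Qed.

Lemma hw_factor_h2 m : hw_factor (121 * m) 242 = h (h [:: hw m; hw m.+1]).
Proof. by rewrite -hw_factor2 -!hw_factor_h mulnA. Qed.

Lemma hw_factor_short_shift_neq i n q : 0 < q -> q < 2 * n -> n <= 21 ->
  hw_factor i n <> hw_factor (i + q) n.
Proof.
move=> q_gt0 q_lt n_le E; set n0 := (q %/ 2).+1.
have prefix_eq : hw_factor i n0 = hw_factor (i + q) n0.
  have take_n0 j : hw_factor j n0 = take n0 (hw_factor j n).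
    by rewrite -{1}[j]addn0 (@hw_factor_sub _ 0 n0 n) ?drop0 //; lia.
  by rewrite !take_n0 E.
move: prefix_eq; rewrite (divn_eq i 121) mulnC -addnA.
rewrite !(@hw_factor_sub _ _ n0 242) ?hw_factor_h2; try lia.
apply/eqP/h2_short_repetition_free; rewrite ?hw_lt4 ?hw_adjacent_neq ?ltn_pmod //; lia.
Qed.

(* [(n + 10) %/ 11] counts the 11-blocks meeting [i, i + n) from the block of i on;
   each contains a position of [i, i + n), which determines its preimage letter. *)
Lemma hw_factor_aligned_shift i n q :
  hw_factor i n = hw_factor (i + 11 * q) n ->
  hw_factor (i %/ 11) ((n + 10) %/ 11) = hw_factor (i %/ 11 + q) ((n + 10) %/ 11).
Proof.
move=> E; apply: hw_factor_eq => k k_lt; set m := i %/ 11 + k.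
pose x := maxn i (11 * m).
have x_in : x - i < n by lia.
have := congr1 (nth 0 ^~ (x - i)) E; rewrite !nth_hw_factor //.
have -> : i + (x - i) = 11 * m + (x - 11 * m) by lia.
have -> : i + 11 * q + (x - i) = 11 * (m + q) + (x - 11 * m) by lia.
rewrite !(@hw_mul11D _ 1) ?hw_factor1; try lia.
move=> eq_at_x; rewrite addnAC; apply: (h1_nth_inj _ _ _ eq_at_x); rewrite ?hw_lt4 //; lia.
Qed.

Lemma hw_factor_unaligned_shift_neq i n q r : 0 < r < 11 -> 21 < n ->
  hw_factor i n <> hw_factor (i + (11 * q + r)) n.
Proof.
move=> r_bd n_gt E; set m := (i %/ 11).+1; set d := 11 * m - i.
have block_eq : hw_factor (11 * m) 11 = hw_factor (11 * (m + q) + r) 11.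
  rewrite (_ : 11 * m = i + d) 1?(_ : 11 * (m + q) + r = i + (11 * q + r) + d); try lia.
  by rewrite !(@hw_factor_sub _ d 11 n) ?E //; lia.
move: block_eq; have -> : hw_factor (11 * m) 11 = h [:: hw m] by rewrite -hw_factor1 -hw_factor_h.
have -> : hw_factor (11 * (m + q) + r) 11 = take 11 (drop r (h [:: hw (m + q); hw (m + q).+1])).
  by rewrite -hw_factor2 -hw_factor_h -hw_factor_sub //; lia.
by move=> /eqP; apply/negP/h_unaligned_neq; rewrite ?hw_lt4.
Qed.

(* Period q on a factor of length n + q has exponent > 3/2 exactly when q < 2n. *)
Lemma hw_factor_shift_neq q i n : 0 < q -> q < 2 * n ->
  hw_factor i n <> hw_factor (i + q) n.
Proof.
elim/ltn_ind: q i n => q IH i n q_gt0 q_lt.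
have [n_le|n_gt] := leqP n 21; first exact: hw_factor_short_shift_neq.
rewrite (divn_eq q 11) mulnC; have r_lt := ltn_pmod q (isT : 0 < 11).
have [r0|r_gt0] := posnP (q %% 11); last by apply: hw_factor_unaligned_shift_neq; rewrite ?r_gt0.
rewrite r0 addn0 => /hw_factor_aligned_shift; apply: IH; lia.
Qed.

Lemma has_period_hw_factor i n q : has_period (hw_factor i (n + q)) q ->
  hw_factor i n = hw_factor (i + q) n.
Proof.
move=> per; apply: hw_factor_eq => k k_lt.
have := per k; rewrite size_hw_factor ltn_add2r !nth_hw_factor; try lia.
by move=> /(_ k_lt); rewrite addnA addnAC.
Qed.

Lemma ratio_gt_three_halves (p q : nat) : 0 < q -> (3%:Q / 2%:Q < p%:Q / q%:Q)%R -> 3 * q < 2 * p.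
Proof.
move=> q_gt0; rewrite ltr_pdivrMr // mulrAC ltr_pdivlMr ?ltr0z //.
by rewrite -!intrM ltr_int; lia.
Qed.

Lemma hw_factor_no_power (i p q : nat) : (3%:Q / 2%:Q < p%:Q / q%:Q)%R ->
  ~ is_power (hw_factor i p) p q.
Proof.
move=> ratio_gt [q_gt0 q_lt_p _]; rewrite -(subnK (ltnW q_lt_p)).
move/has_period_hw_factor; apply: hw_factor_shift_neq => //.
by have := ratio_gt_three_halves q_gt0 ratio_gt; lia.
Qed.

Lemma infix_hn x n : infix x (hn n) -> exists i, x = hw_factor i (size x).
Proof.
case/infixP=> s [s' hn_eq]; exists (size s).
have size_le : size s + size x <= 11 ^ n by rewrite -size_hn hn_eq !size_cat addnA leq_addr.
by rewrite (hw_factor_hn size_le) hn_eq drop_size_cat // take_size_cat.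
Qed.

Lemma palindrome_hn n : palindrome (hn n).
Proof.
elim: n => // n /eqP IH; apply/eqP.
by rewrite hnS rev_h ?IH // (sub_all h_letter_palindrome (all_hn n)).
Qed.

Theorem mainTheorem8 :
  (forall a, a < 4 -> palindrome (h_letter a)) /\
  (forall i p q : nat, (3%:Q / 2%:Q < p%:Q / q%:Q)%R ->
     ~ is_power (hw_factor i p) p q) /\
  (forall n : nat, 1 <= n ->
     [/\ palindrome (hn n), size (hn n) = 11 ^ n &
         critical_exponent_is (hn n) (3%:Q / 2%:Q)%R]).
Proof.
split; first exact: h_letter_palindrome.
split; first exact: hw_factor_no_power.
move=> n n_ge1; split; [exact: palindrome_hn | exact: size_hn | split].
  exists [:: 1; 3; 1], 3, 2; split => //; last by split=> //; case=> [|[|k]]; rewrite addn2.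
  by apply: (@infix_prefix_trans _ (hn 1)); last exact: prefix_hn.
move=> x p q /infix_hn [i ->] power_x; rewrite leNgt; apply/negP => ratio_gt.
have [_ _ size_x _] := power_x; rewrite size_hw_factor in size_x.
by rewrite size_x in power_x; apply: hw_factor_no_power ratio_gt power_x.
Qed.
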